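(* Let $(X,P,o)$ be a generalized parametric metric space such that $P$ satisfies (P5) and $o$ is continuous. Then every open ball $B(a,\alpha,t)$ ($a\in X$, $\alpha>0$, $t>0$) belongs to $\tau_P$.
   Context: A binary operation $o:[0,\infty)\times[0,\infty)\to[0,\infty)$ (written $\alpha\, o\, \beta$) is assumed to satisfy, for all $\alpha,\beta,\gamma\in[0,\infty)$: (a) $\alpha\, o\, 0=\alpha$; (b) $\alpha\le\beta\implies \alpha\, o\,\gamma\le\beta\, o\,\gamma$; (c) $\alpha\, o\,\gamma=\gamma\, o\,\alpha$; (d) $\alpha\, o\,(\beta\, o\,\gamma)=(\alpha\, o\,\beta)\, o\,\gamma$. It is continuous if whenever $\alpha_n\to\alpha$ and $\beta_n\to\beta$ in $[0,\infty)$ we have $\alpha_n\, o\,\beta_n\to\alpha\, o\,\beta$. A generalized parametric metric on a nonempty set $X$ is a function $P:X\times X\times(0,\infty)\to[0,\infty)$ such that: (P1) $P(a,b,t)=0$ for all $t>0$ if and only if $a=b$; (P2) $P(a,b,t)=P(b,a,t)$ for all $a,b\in X$, $t>0$; (P3) $P(a,b,s+t)\le P(a,x,s)\, o\, P(b,x,t)$ for all $s,t>0$ and $a,b,x\in X$. The triple $(X,P,o)$ is a generalized parametric metric space. Condition (P5): for all $a,b\in X$, the map $t\mapsto P(a,b,t)$ is continuous on $(0,\infty)$. Open ball: $B(a,\alpha,t)=\{b\in X: P(a,b,t)<\alpha\}$. $\tau_P$ is the topology consisting of all $A\subseteq X$ such that for every $a\in A$ there exist $\alpha>0,t>0$ with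 $B(a,\alpha,t)\subseteq A$. *)

From Stdlib Require Import Reals.
Open Scope R_scope.

(* A binary operation o on [0,oo), represented as o : R -> R -> R whose
   behaviour is only constrained on nonnegative arguments. *)
Definition is_gp_operation (o : R -> R -> R) : Prop :=
  (forall a b, 0 <= a -> 0 <= b -> 0 <= o a b) /\
  (forall a, 0 <= a -> o a 0 = a) /\
  (forall a b c, 0 <= a -> 0 <= b -> 0 <= c -> a <= b -> o a c <= o b c) /\
  (forall a c, 0 <= a -> 0 <= c -> o a c = o c a) /\
  (forall a b c, 0 <= a -> 0 <= b -> 0 <= c -> o a (o b c) = o (o a b) c).

Definition op_continuous (o : R -> R -> R) : Prop :=
  forall (an bn : nat -> R) (a b : R),
    (forall n, 0 <= an n) -> (forall n, 0 <= bn n) -> 0 <= a -> 0 <= b ->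
    Un_cv an a -> Un_cv bn b -> Un_cv (fun n => o (an n) (bn n)) (o a b).

(* P : X -> X -> R -> R, only meaningful for t > 0. *)
Definition is_gen_param_metric {X : Type} (P : X -> X -> R -> R)
  (o : R -> R -> R) : Prop :=
  (forall a b t, 0 < t -> 0 <= P a b t) /\
  (forall a b, (forall t, 0 < t -> P a b t = 0) <-> a = b) /\
  (forall a b t, 0 < t -> P a b t = P b a t) /\
  (forall a b x s t, 0 < s -> 0 < t ->
      P a b (s + t) <= o (P a x s) (P b x t)).

Definition P5 {X : Type} (P : X -> X -> R -> R) : Prop :=
  forall a b t, 0 < t -> continuity_pt (fun s => P a b s) t.

Definition open_ball {X : Type} (P : X -> X -> R -> R) (a : X) (alpha t : R)
  : X -> Prop := fun b => P a b t < alpha.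

Definition in_tauP {X : Type} (P : X -> X -> R -> R) (A : X -> Prop) : Prop :=
  forall a, A a -> exists alpha t, 0 < alpha /\ 0 < t /\
    (forall b, open_ball P a alpha t b -> A b).

From Stdlib Require Import Reals Lra.
Open Scope R_scope.

(* Let P a b t < alpha.  We look for an inner radius s in (0,t) and a
   tolerance beta > 0 with  o (P a b (t - s)) beta < alpha.  Such a pair
   exists: along s_n = (t/2)/2^n and beta_n = 1/2^n, (P5) gives
   P a b (t - s_n) --> P a b t, continuity of o then gives
   o (P a b (t - s_n)) beta_n --> o (P a b t) 0 = P a b t < alpha, and
   some term of the sequence is below alpha.  Given such s and beta, the
   triangle inequality (P3) with the split t = (t - s) + s, symmetry (P2)
   and monotonicity of o show that B(b,beta,s) is contained in B(a,alpha,t). *)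

Lemma cv_const (c : R) : Un_cv (fun _ => c) c.
Proof.
  intros eps Heps; exists 0%nat; intros n _.
  rewrite Rdist_eq; exact Heps.
Qed.

Lemma cv_some_term_lt (u : nat -> R) (l y : R) :
  Un_cv u l -> l < y -> exists n, u n < y.
Proof.
  intros Hcv Hly.
  destruct (Hcv (y - l)) as [N HN]; [lra |].
  exists N; specialize (HN N (le_n N)); unfold R_dist in HN.
  apply Rabs_def2 in HN; lra.
Qed.

Lemma halving_bounds (a : R) (n : nat) : 0 < a -> 0 < a / 2 ^ n <= a.
Proof.
  intros Ha.
  assert (H2n : 1 <= 2 ^ n) by (apply pow_R1_Rle; lra).
  split.
  - apply Rdiv_lt_0_compat; lra.
  - unfold Rdiv; rewrite <- (Rmult_1_r a) at 2.
    apply Rmult_le_compat_l; [lra |].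
    rewrite <- Rinv_1; apply Rinv_le_contravar; lra.
Qed.

Section GeneralizedParametricMetric.

Variables (X : Type) (P : X -> X -> R -> R) (o : R -> R -> R).
Hypothesis Hop : is_gp_operation o.
Hypothesis HP : is_gen_param_metric P o.

Lemma op_mono_r (x y z : R) :
  0 <= x -> 0 <= y -> 0 <= z -> y <= z -> o x y <= o x z.
Proof.
  destruct Hop as [_ [_ [Hmon [Hcom _]]]]; intros Hx Hy Hz Hyz.
  rewrite (Hcom x y), (Hcom x z) by assumption.
  exact (Hmon y z x Hy Hz Hx Hyz).
Qed.

Lemma op_cv_zero_r (u v : nat -> R) (x : R) :
  op_continuous o ->
  (forall n, 0 <= u n) -> (forall n, 0 <= v n) -> 0 <= x ->
  Un_cv u x -> Un_cv v 0 -> Un_cv (fun n => o (u n) (v n)) x.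
Proof.
  intros Hoc Hu Hv Hx Hcu Hcv.
  destruct Hop as [_ [Hzero _]].
  rewrite <- (Hzero x Hx).
  exact (Hoc u v x 0 Hu Hv Hx (Rle_refl 0) Hcu Hcv).
Qed.

(* If o (P a b (t - s)) beta < alpha, the ball B(b,beta,s) lies in
   B(a,alpha,t): split t = (t - s) + s in the triangle inequality. *)
Lemma open_ball_inner (a b : X) (alpha t s beta : R) :
  0 < s < t -> o (P a b (t - s)) beta < alpha ->
  forall c, open_ball P b beta s c -> open_ball P a alpha t c.
Proof.
  destruct HP as [Pnn [_ [Psym Ptri]]].
  intros [Hs Hst] Hlt c Hc; unfold open_ball in *.
  replace t with ((t - s) + s) by ring.
  eapply Rle_lt_trans; [apply (Ptri a c b); lra |].
  rewrite (Psym c b) by lra.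
  eapply Rle_lt_trans; [| exact Hlt].
  assert (Hbc : 0 <= P b c s) by (apply Pnn; lra).
  apply op_mono_r; try apply Pnn; lra.
Qed.

Lemma inner_radius_exists (a b : X) (alpha t : R) :
  op_continuous o -> P5 P -> 0 < t -> P a b t < alpha ->
  exists s beta, 0 < s < t /\ 0 < beta /\ o (P a b (t - s)) beta < alpha.
Proof.
  destruct HP as [Pnn _]; intros Hoc HP5 Ht Hab.
  set (s := fun n : nat => (t / 2) / 2 ^ n).
  set (beta := fun n : nat => 1 / 2 ^ n).
  assert (Hs : forall n, 0 < s n < t).
  { intro n; pose proof (halving_bounds (t / 2) n); unfold s; lra. }
  assert (Hbeta : forall n, 0 < beta n).
  { intro n; apply (halving_bounds 1 n); lra. }
  assert (Hshift : Un_cv (fun n => t - s n) t).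
  { pose proof (CV_minus _ _ t 0 (cv_const t) (cv_pow_half (t / 2))) as Hcv.
    rewrite Rminus_0_r in Hcv; exact Hcv. }
  assert (HPcv : Un_cv (fun n => P a b (t - s n)) (P a b t)).
  { exact (continuity_seq (fun r => P a b r) _ t (HP5 a b t Ht) Hshift). }
  assert (Hocv : Un_cv (fun n => o (P a b (t - s n)) (beta n)) (P a b t)).
  { apply op_cv_zero_r; try assumption.
    - intro n; apply Pnn; pose proof (Hs n); lra.
    - intro n; left; apply Hbeta.
    - apply Pnn; lra.
    - exact (cv_pow_half 1). }
  destruct (cv_some_term_lt _ _ _ Hocv Hab) as [n Hn].
  exists (s n), (beta n); auto.
Qed.

End GeneralizedParametricMetric.

Theorem mainTheorem2 (X : Type) (P : X -> X -> R -> R) (o : R -> R -> R) :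
  is_gp_operation o -> op_continuous o -> is_gen_param_metric P o -> P5 P ->
  forall (a : X) (alpha t : R), 0 < alpha -> 0 < t ->
    in_tauP P (open_ball P a alpha t).
Proof.
  intros Hop Hoc HP HP5 a alpha t _ Ht b Hb.
  destruct (inner_radius_exists X P o Hop HP a b alpha t Hoc HP5 Ht Hb)
    as [s [beta [Hs [Hbeta Hlt]]]].
  exists beta, s; repeat split; try tauto.
  exact (open_ball_inner X P o Hop HP a b alpha t s beta Hs Hlt).
Qed.
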